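(* Let $C^\lambda_{\mu\nu}$ be structure constants of an $n$-dimensional Lie algebra over a field $k$ of characteristic zero, $\mathcal C$ the matrix with entries $\mathcal C^\alpha_\beta=C^\alpha_{\beta\gamma}\partial^\gamma$ in $k[[\partial^1,\dots,\partial^n]]$, and $\delta_\rho:=\frac{\partial}{\partial(\partial^\rho)}$. Then for every $N=0,1,2,\dots$ and all indices $\gamma,\mu,\nu$, $$[\delta_\rho(\mathcal C^N)^\gamma_\mu]\,\mathcal C^\rho_\nu-(\delta_\rho\mathcal C^\gamma_\nu)(\mathcal C^N)^\rho_\mu=C^\sigma_{\mu\nu}(\mathcal C^N)^\gamma_\sigma .$$
   Context: Summation over repeated indices is understood. ''Structure constants of a Lie algebra'' means $[\hat x_\mu,\hat x_\nu]=C^\lambda_{\mu\nu}\hat x_\lambda$ for a basis $\hat x_1,\dots,\hat x_n$, so they are antisymmetric in the lower indices and satisfy the Jacobi identity. $\mathcal C^N$ is the $N$-th matrix power ($\mathcal C^0$ the identity matrix), and $\delta_\rho$ is the formal partial derivative with respect to the variable $\partial^\rho$. *)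

From HB Require Import structures.
From mathcomp Require Import all_boot all_order all_algebra.
From mathcomp Require Import mpoly.
Set Implicit Arguments. Unset Strict Implicit. Unset Printing Implicit Defensive.
Import GRing.Theory.
Local Open Scope ring_scope.

(* Structure constants C l m n  stand for  C^l_{m n}:  [x_m, x_n] = C^l_{m n} x_l. *)
Definition lie_structure_constants (k : fieldType) (n : nat)
    (C : 'I_n -> 'I_n -> 'I_n -> k) : Prop :=
  (forall l m p, C l m p = - C l p m) /\
  (forall m p r l,
     \sum_(s < n) (C s m p * C l s r + C s p r * C l s m + C s r m * C l s p) = 0).

(* The matrix  \mathcal C^a_b = C^a_{b g} d^g  with polynomial entries in the
   variables d^1..d^n (the X_g of {mpoly k[n]}). *)
Definition calC (k : fieldType) (n : nat) (C : 'I_n -> 'I_n -> 'I_n -> k)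
  : 'M[{mpoly k[n]}]_n :=
  \matrix_(a < n, b < n) \sum_(g < n) (C a b g)%:MP * 'X_g.

From mathcomp Require Import all_boot all_order all_algebra.
From mathcomp Require Import mpoly.
From mathcomp Require Import ring.
Set Implicit Arguments. Unset Strict Implicit. Unset Printing Implicit Defensive.
Import GRing.Theory.
Local Open Scope ring_scope.

(* Fix the column index [v] and let [delta_v p := sum_r (d p / d d^r) calC^r_v]
   act entrywise on matrices.  It is a derivation of the matrix ring, as is the
   commutator with the constant matrix [adC v := (C^a_{v b})_{a b}].  The Jacobi
   identity says exactly that the two derivations agree on [calC], hence they
   agree on every power [calC ^+ N]; the theorem is the entry [(g, m)] of this
   equality. *)

Section Derivations.
Variable R : pzRingType.

Definition derivation (d : R -> R) :=
  {morph d : x y / x + y} /\ forall x y, d (x * y) = d x * y + x * d y.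

Lemma derivation0 d : derivation d -> d 0 = 0.
Proof.
by case=> dD _; apply: (@addrI _ (d 0)); rewrite -dD !addr0.
Qed.

Lemma derivation1 d : derivation d -> d 1 = 0.
Proof.
case=> _ dM; have := dM 1 1; rewrite !mulr1 mul1r.
by move=> /(congr1 (fun z => z - d 1)); rewrite subrr addrK => <-.
Qed.

Lemma derivation_exp d d' x N :
  derivation d -> derivation d' -> d x = d' x -> d (x ^+ N) = d' (x ^+ N).
Proof.
move=> dD d'D dx; elim: N => [|N IH]; first by rewrite !expr0 !derivation1.
by rewrite !exprS dD.2 d'D.2 IH dx.
Qed.

Lemma derivation_commutator a : derivation (fun x => a * x - x * a).
Proof.
split=> [x y|x y]; first by rewrite mulrDr mulrDl opprD addrACA.
by rewrite mulrBl mulrBr !mulrA addrA subrK.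
Qed.

End Derivations.

Lemma derivation_map_mx (R : pzRingType) n (d : R -> R) :
  derivation d -> derivation (map_mx d : 'M[R]_n -> 'M[R]_n).
Proof.
move=> dD; have d0 := derivation0 dD; case: dD => dD dM.
split=> A B; apply/matrixP=> i j; rewrite !mxE ?dD //.
rewrite (big_morph d dD d0) -big_split /=.
by apply: eq_bigr => a _; rewrite dM !mxE.
Qed.

Lemma derivation_sum_mulr (R : comPzRingType) (I : finType)
    (d : I -> R -> R) (c : I -> R) :
  (forall i, derivation (d i)) -> derivation (fun x => \sum_i d i x * c i).
Proof.
move=> dD; split=> [x y|x y].
  by rewrite -big_split; apply: eq_bigr => i _; rewrite (dD i).1 mulrDl.
rewrite mulr_suml mulr_sumr -big_split; apply: eq_bigr => i _ /=.
by rewrite (dD i).2 mulrDl mulrAC mulrA.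
Qed.

Lemma derivation_mderiv (R : comNzRingType) n (i : 'I_n) :
  derivation (mderiv i : {mpoly R[n]} -> _).
Proof. by split; [exact: mderivD | exact: mderivM]. Qed.

Lemma mderivX1 (R : nzRingType) n (r q : 'I_n) :
  mderiv r ('X_q : {mpoly R[n]}) = (q == r)%:R.
Proof.
rewrite mderivX mnm1E; case: eqP => [->|_]; last by rewrite scale0r.
suff -> : (U_(r) - U_(r))%MM = 0%MM by rewrite mpolyX0 scale1r.
by apply/mnmP=> i; rewrite !mnmE subnn.
Qed.

Lemma sum_linear_forms (R : comNzRingType) n (c : 'I_n -> R) (e : 'I_n -> 'I_n -> R) :
  \sum_a (c a)%:MP * \sum_q (e a q)%:MP * 'X_q
  = \sum_q (\sum_a c a * e a q)%:MP * 'X_q :> {mpoly R[n]}.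
Proof.
under eq_bigr => a _ do rewrite mulr_sumr.
rewrite exchange_big; apply: eq_bigr => q _ /=.
rewrite rmorph_sum mulr_suml; apply: eq_bigr => a _.
by rewrite rmorphM mulrA.
Qed.

Section LieStructureConstants.
Variables (k : fieldType) (n : nat) (C : 'I_n -> 'I_n -> 'I_n -> k).
Hypothesis hC : lie_structure_constants C.

Lemma lie_adjoint_bracket v m t q :
  \sum_a C t v a * C a m q - \sum_a C t m a * C a v q
  = \sum_s C s v m * C t s q.
Proof.
case: hC => anti jac; apply/eqP; rewrite -subr_eq0 -!sumrB; apply/eqP.
rewrite -[RHS](jac v q m t); apply: eq_bigr => a _.
by rewrite (anti t v a) (anti a m q) (anti t m a) (anti a v m); ring.
Qed.

Local Notation calC := (calC C).

Definition calC_deriv v (p : {mpoly k[n]}) := \sum_(r < n) mderiv r p * calC r v.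

Definition adC v : 'M[{mpoly k[n]}]_n := \matrix_(a, b) (C a v b)%:MP.

Lemma mderiv_calC r a b : mderiv r (calC a b) = (C a b r)%:MP.
Proof.
rewrite mxE raddf_sum (bigD1 r) //= big1 ?addr0.
  by rewrite mderiv_mulC mderivX1 eqxx mulr1.
by move=> q /negPf qr; rewrite mderiv_mulC mderivX1 qr mulr0.
Qed.

Lemma calC_deriv_calC v :
  map_mx (calC_deriv v) calC = adC v * calC - calC * adC v.
Proof.
apply/matrixP=> t m; rewrite mxE /calC_deriv.
under eq_bigr => r _ do rewrite mderiv_calC.
rewrite !mxE.
under eq_bigr => r _ do rewrite mxE.
under [X in _ = X - _]eq_bigr => a _ do rewrite !mxE.
under [X in _ = _ - X]eq_bigr => a _ do rewrite !mxE mulrC.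
rewrite !sum_linear_forms -sumrB; apply: eq_bigr => q _.
by rewrite -mulrBl -rmorphB -(lie_adjoint_bracket v m t q) subKr.
Qed.

Lemma derivation_calC_deriv v : derivation (calC_deriv v).
Proof. exact: (derivation_sum_mulr (calC ^~ v) (@derivation_mderiv _ _)). Qed.

Lemma calC_deriv_exp v N :
  map_mx (calC_deriv v) (calC ^+ N) = adC v * calC ^+ N - calC ^+ N * adC v.
Proof.
exact: derivation_exp N (derivation_map_mx n (derivation_calC_deriv v))
  (derivation_commutator (adC v)) (calC_deriv_calC v).
Qed.

Lemma calC_deriv_expE v N g m :
  calC_deriv v ((calC ^+ N) g m)
  = (adC v * calC ^+ N) g m - (calC ^+ N * adC v) g m.
Proof. by move: (calC_deriv_exp v N) => /matrixP/(_ g m); rewrite !mxE. Qed.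

Lemma adC_mulE v (A : 'M_n) g m : (adC v * A) g m = \sum_r (C g v r)%:MP * A r m.
Proof. by rewrite mxE; apply: eq_bigr => r _; rewrite mxE. Qed.

Lemma mul_adCE v (A : 'M_n) g m :
  (A * adC v) g m = - \sum_s (C s m v)%:MP * A g s.
Proof.
case: hC => anti _; rewrite mxE -sumrN; apply: eq_bigr => s _.
by rewrite mxE (anti s v m) rmorphN mulrN mulrC.
Qed.

End LieStructureConstants.

Theorem lemma2 (k : fieldType) (n : nat) (C : 'I_n -> 'I_n -> 'I_n -> k)
  (char0 : [pchar k] =i pred0)
  (hC : lie_structure_constants C)
  (N : nat) (g m v : 'I_n) :
  \sum_(r < n) mderiv r (((calC C) ^+ N) g m) * (calC C) r v
  - \sum_(r < n) mderiv r ((calC C) g v) * ((calC C) ^+ N) r m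
  = \sum_(s < n) (C s m v)%:MP * ((calC C) ^+ N) g s.
Proof.
under [X in _ - X = _]eq_bigr => r _ do rewrite mderiv_calC.
rewrite -/(calC_deriv C v _) (calC_deriv_expE hC) adC_mulE (mul_adCE hC).
by rewrite opprK addrAC subrr add0r.
Qed.
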